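(* Let $K$ be a field of characteristic $p>2$, $m\ge1$, and let $O_1(m)$ be the divided power algebra equipped with the product $a\star b=\partial(ab)$. Then the space of multilinear polynomial identities of degree $4$ of $(O_1(m),\star)$ is generated by the polynomials (products written as juxtaposition and meaning $\star$) $$Tortken(t_1,t_2,t_3,t_4)=(t_1t_2)(t_3t_4)-(t_1t_4)(t_3t_2)-(t_1(t_2t_3))t_4+((t_1t_2)t_3)t_4+(t_1(t_4t_3))t_2-((t_1t_4)t_3)t_2,$$ $$Com(t_1,t_2)=t_1t_2-t_2t_1,$$ and, only in the case $(p,m)=(3,1)$, additionally $$Tortken'(t_1,t_2,t_3,t_4)=(t_1t_3)(t_2t_4)+(t_1t_4)(t_2t_3)+((t_1t_3)t_4)t_2+((t_1t_4)t_2)t_3+((t_2t_3)t_1)t_4+((t_2t_4)t_3)t_1;$$ i.e. every multilinear degree-4 identity of this algebra is a consequence of these identities.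
   Context: $O_1(m)$ has basis $x^{(i)}$, $0\le i\le p^m-1$, product $x^{(i)}x^{(j)}=\binom{i+j}{j}x^{(i+j)}$ (zero if $i+j\ge p^m$), and derivation $\partial$ with $\partial x^{(i)}=x^{(i-1)}$, $\partial x^{(0)}=0$. Equivalently, with $e_i=x^{(i+1)}$, $-1\le i\le p^m-2$, one has $e_i\star e_j=\binom{i+j+2}{i+1}e_{i+j}$. *)

From HB Require Import structures.
From mathcomp Require Import all_boot all_order all_algebra.
Set Implicit Arguments. Unset Strict Implicit. Unset Printing Implicit Defensive.
Import Order.TTheory GRing.Theory Num.Theory.
Local Open Scope ring_scope.

(* The divided power algebra O_1(m) over K (char p), as row vectors of     *)
(* length p^m : coordinate i is the coefficient of x^(i).                  *)
Section Divided.
Variables (K : fieldType) (p m : nat).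
Local Notation n := (p ^ m)%N.

(* x^(i) x^(j) = C(i+j, j) x^(i+j), zero if i + j >= p^m *)
Definition dp_mul (a b : 'rV[K]_n) : 'rV[K]_n :=
  \row_(k < n) \sum_(i < n) \sum_(j < n | (i + j)%N == k)
      ('C(i + j, j))%:R * (a 0 i * b 0 j).

Definition dp_der (a : 'rV[K]_n) : 'rV[K]_n :=
  \row_(k < n) \sum_(i < n | val i == k.+1) a 0 i.

Definition dp_star (a b : 'rV[K]_n) : 'rV[K]_n := dp_der (dp_mul a b).
End Divided.

(* Polynomials are given syntactically (napoly); their value in the free    *)
(* algebra is the coefficient function [na_coef] on nonassociative monomials. *)
Inductive nterm : Type := NVar of nat | NMul of nterm & nterm.

Fixpoint leaves (t : nterm) : seq nat :=
  match t with NVar i => [:: i] | NMul a b => leaves a ++ leaves b end.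

Inductive napoly (K : Type) : Type :=
| PZero
| PVar of nat
| PAdd of napoly K & napoly K
| PScale of K & napoly K
| PMul of napoly K & napoly K.
Arguments PZero {K}.
Arguments PVar {K}.

(* propositional list membership (napoly has no decidable equality) *)
Fixpoint inseq (T : Type) (x : T) (s : seq T) : Prop :=
  match s with [::] => False | y :: s' => y = x \/ inseq x s' end.

Section FreeAlg.
Variable K : fieldType.

Fixpoint na_coef (f : napoly K) (t : nterm) : K :=
  match f with
  | PZero => 0
  | PVar i => match t with NVar j => if i == j then 1 else 0 | _ => 0 end
  | PAdd f g => na_coef f t + na_coef g t
  | PScale c f => c * na_coef f t
  | PMul f g => match t with NMul a b => na_coef f a * na_coef g b | _ => 0 end
  end.

Fixpoint na_subst (s : nat -> napoly K) (f : napoly K) : napoly K :=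
  match f with
  | PZero => PZero
  | PVar i => s i
  | PAdd f g => PAdd (na_subst s f) (na_subst s g)
  | PScale c f => PScale c (na_subst s f)
  | PMul f g => PMul (na_subst s f) (na_subst s g)
  end.

Fixpoint na_eval (V : lmodType K) (mul : V -> V -> V) (v : nat -> V) (f : napoly K) : V :=
  match f with
  | PZero => 0
  | PVar i => v i
  | PAdd f g => na_eval mul v f + na_eval mul v g
  | PScale c f => c *: na_eval mul v f
  | PMul f g => mul (na_eval mul v f) (na_eval mul v g)
  end.

Definition is_identity (V : lmodType K) (mul : V -> V -> V) (f : napoly K) : Prop :=
  forall v : nat -> V, na_eval mul v f = 0.

Definition multilin4 (f : napoly K) : Prop :=
  forall t : nterm, na_coef f t != 0 -> perm_eq (leaves t) [:: 1; 2; 3; 4]%N.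

(* f is a consequence of the identities in S, i.e. f lies in the T-ideal
   of the free algebra generated by S: the ideal generated by all
   substitution instances of elements of S (membership taken modulo
   equality in the free algebra, i.e. equality of coefficient functions) *)
Inductive conseq (S : seq (napoly K)) : napoly K -> Prop :=
| conseq_gen g (s : nat -> napoly K) : inseq g S -> conseq S (na_subst s g)
| conseq_zero : conseq S PZero
| conseq_add f g : conseq S f -> conseq S g -> conseq S (PAdd f g)
| conseq_scale c f : conseq S f -> conseq S (PScale c f)
| conseq_mull h f : conseq S f -> conseq S (PMul h f)
| conseq_mulr h f : conseq S f -> conseq S (PMul f h)
| conseq_ext f g : conseq S f -> na_coef f =1 na_coef g -> conseq S g.

Local Notation "x * y" := (PMul x y).
Local Notation "x + y" := (PAdd x y).
Local Notation "x - y" := (PAdd x (PScale (-1) y)).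
Local Notation t1 := (PVar 1%N).
Local Notation t2 := (PVar 2%N).
Local Notation t3 := (PVar 3%N).
Local Notation t4 := (PVar 4%N).

Definition Tortken : napoly K :=
  (t1 * t2) * (t3 * t4) - (t1 * t4) * (t3 * t2) - (t1 * (t2 * t3)) * t4
  + ((t1 * t2) * t3) * t4 + (t1 * (t4 * t3)) * t2 - ((t1 * t4) * t3) * t2.

Definition Com : napoly K := t1 * t2 - t2 * t1.

Definition Tortken' : napoly K :=
  (t1 * t3) * (t2 * t4) + (t1 * t4) * (t2 * t3) + ((t1 * t3) * t4) * t2
  + ((t1 * t4) * t2) * t3 + ((t2 * t3) * t1) * t4 + ((t2 * t4) * t3) * t1.

Definition O1_gens (p m : nat) : seq (napoly K) :=
  if (p == 3%N) && (m == 1%N) then [:: Tortken; Com; Tortken']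
  else [:: Tortken; Com].
End FreeAlg.

(* O_1(m) with its ordinary product is commutative and associative with unit
   x^(0), and the derivation d satisfies the Leibniz rule: at the top degree
   this needs p | C(p^m, j) for 0 < j < p^m.  So a * b = d(ab) is commutative,
   and Tortken holds because it vanishes in every commutative ring with a
   derivation once D(xy) = D(x) y + x D(y) is expanded.  For (p, m) = (3, 1)
   the algebra is 3-dimensional and Tortken' is checked coordinatewise.
   Conversely, modulo Com the multilinear monomials of degree 4 fall into 15
   commutative classes, and explicit integer combinations of instances of
   Tortken (and of Tortken' when (p, m) = (3, 1), reducing modulo 3) rewrite
   each class in terms of 10 (resp. 9) normal monomials.  A combination of
   normal monomials that is an identity is then evaluated at basis vectors
   x^(w_1), ..., x^(w_4) for 10 (resp. 9) weight vectors w with entries at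
   most 4 (this needs p^m >= 5 unless (p, m) = (3, 1)).  The resulting integer
   matrix has an integer left inverse up to the factor 2^7 (resp. 40), a unit
   of K because p > 2 (resp. p = 3), so all coefficients vanish. *)

From HB Require Import structures.
From mathcomp Require Import all_boot all_algebra.
From mathcomp Require Import zify ring.
Set Implicit Arguments. Unset Strict Implicit. Unset Printing Implicit Defensive.
Import GRing.Theory.
Local Open Scope ring_scope.

Lemma sum_seq_delta (V : nmodType) (T : eqType) (U : seq T) (G : T -> V) t :
  uniq U -> \sum_(u <- U) G u *+ (u == t) = if t \in U then G t else 0.
Proof.
move=> uU; case: ifP => tU.
  rewrite (big_rem t) //= eqxx mulr1n big_seq_cond big1 ?addr0 // => u /andP[uR _].
  suff /negbTE-> : u != t by rewrite mulr0n.
  by apply: contraTneq uR => ->; rewrite mem_rem_uniqF.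
rewrite big_seq_cond big1 // => u /andP[uU' _].
by case: eqP => [ut|_]; [move: tU; rewrite -ut uU' | rewrite mulr0n].
Qed.

(** * Monomials and polynomials of the free nonassociative algebra *)

Fixpoint nterm_eqb (a b : nterm) : bool :=
  match a, b with
  | NVar i, NVar j => i == j
  | NMul a1 a2, NMul b1 b2 => nterm_eqb a1 b1 && nterm_eqb a2 b2
  | _, _ => false
  end.

Lemma nterm_eqP : Equality.axiom nterm_eqb.
Proof.
elim=> [i|a1 IH1 a2 IH2] [j|b1 b2] /=; try by constructor.
- by apply: (iffP eqP) => [->|[]].
- apply: (iffP andP) => [[/IH1 -> /IH2 ->]//|[<- <-]].
  by split; [apply/IH1|apply/IH2].
Qed.
HB.instance Definition _ := hasDecEq.Build nterm nterm_eqP.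

Lemma eqNVar i j : (NVar i == NVar j) = (i == j). Proof. by []. Qed.
Lemma eqNMul a b c d : (NMul a b == NMul c d) = (a == c) && (b == d).
Proof. by []. Qed.

Section FreeAlgebra.
Variable K : fieldType.

Fixpoint monomial (t : nterm) : napoly K :=
  match t with NVar i => PVar i | NMul a b => PMul (monomial a) (monomial b) end.

Lemma coef_monomial t u : na_coef (monomial t) u = (t == u)%:R.
Proof.
elim: t u => [i|a IHa b IHb] [j|c d] //=; first by rewrite eqNVar; case: eqP.
by rewrite IHa IHb eqNMul -mulnb natrM.
Qed.

Definition coef_of (l : seq (K * nterm)) (u : nterm) : K :=
  \sum_(x <- l) x.1 * (x.2 == u)%:R.

Fixpoint terms (f : napoly K) : seq (K * nterm) :=
  match f with
  | PZero => [::]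
  | PVar i => [:: (1, NVar i)]
  | PAdd f g => terms f ++ terms g
  | PScale c f => [seq (c * x.1, x.2) | x <- terms f]
  | PMul f g => [seq (x.1 * y.1, NMul x.2 y.2) | x <- terms f, y <- terms g]
  end.

Lemma coef_terms f u : na_coef f u = coef_of (terms f) u.
Proof.
rewrite /coef_of; elim: f u => [|i|f IHf g IHg|c f IHf|f IHf g IHg] u /=.
- by rewrite big_nil.
- by rewrite big_seq1 mul1r; case: u => [j|a b] //=; rewrite eqNVar; case: eqP.
- by rewrite big_cat IHf IHg.
- by rewrite IHf big_map mulr_sumr; apply: eq_bigr => x _; rewrite mulrA.
rewrite big_allpairs_dep; case: u => [j|a b].
  by rewrite big1 // => x _; rewrite big1 // => y _; rewrite mulr0.
rewrite IHf IHg mulr_suml; apply: eq_bigr => x _.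
rewrite mulr_sumr; apply: eq_bigr => y _.
by rewrite eqNMul -mulnb natrM /=; ring.
Qed.

Definition napoly_of_terms (l : seq (K * nterm)) : napoly K :=
  foldr (fun x g => PAdd (PScale x.1 (monomial x.2)) g) PZero l.

Lemma coef_napoly_of_terms l u : na_coef (napoly_of_terms l) u = coef_of l u.
Proof.
rewrite /coef_of; elim: l => [|x l IH]; first by rewrite big_nil.
by rewrite big_cons /= IH coef_monomial.
Qed.

Section Evaluation.
Variables (V : lmodType K) (mul : V -> V -> V).

Fixpoint nterm_eval (v : nat -> V) (t : nterm) : V :=
  match t with NVar i => v i | NMul a b => mul (nterm_eval v a) (nterm_eval v b) end.

Lemma na_eval_monomial v t : na_eval mul v (monomial t) = nterm_eval v t.
Proof. by elim: t => //= a -> b ->. Qed.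

Lemma na_eval_napoly_of_terms v l :
  na_eval mul v (napoly_of_terms l) = \sum_(x <- l) x.1 *: nterm_eval v x.2.
Proof.
elim: l => [|x l IH]; first by rewrite big_nil.
by rewrite big_cons /= IH na_eval_monomial.
Qed.

Lemma na_eval_subst v s f :
  na_eval mul v (na_subst s f) = na_eval mul (fun i => na_eval mul v (s i)) f.
Proof. by elim: f => //= [f -> g ->|c f ->|f -> g ->]. Qed.

Hypothesis mulDl : left_distributive mul +%R.
Hypothesis mulDr : right_distributive mul +%R.
Hypothesis mulZl : forall a x y, mul (a *: x) y = a *: mul x y.
Hypothesis mulZr : forall a x y, mul x (a *: y) = a *: mul x y.

Lemma mul_zerol x : mul 0 x = 0.
Proof. by rewrite -[X in mul X _](scale0r (0 : V)) mulZl scale0r. Qed.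
Lemma mul_zeror x : mul x 0 = 0.
Proof. by rewrite -[X in mul _ X](scale0r (0 : V)) mulZr scale0r. Qed.

Lemma na_eval_terms v f : na_eval mul v f = \sum_(x <- terms f) x.1 *: nterm_eval v x.2.
Proof.
elim: f => [|i|f IHf g IHg|c f IHf|f IHf g IHg] /=.
- by rewrite big_nil.
- by rewrite big_seq1 scale1r.
- by rewrite big_cat IHf IHg.
- by rewrite IHf big_map scaler_sumr; apply: eq_bigr => x _; rewrite scalerA.
rewrite big_allpairs_dep IHf IHg.
rewrite (big_morph (mul^~ _) (fun x y => mulDl x y _) (mul_zerol _)); apply: eq_bigr => x _ /=.
rewrite (big_morph (mul _) (mulDr _) (mul_zeror _)); apply: eq_bigr => y _ /=.
by rewrite mulZl mulZr scalerA mulrC.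
Qed.

Lemma sum_terms_coef_of (l : seq (K * nterm)) (U : seq nterm) (G : nterm -> V) :
  uniq U -> {subset map snd l <= U} ->
  \sum_(x <- l) x.1 *: G x.2 = \sum_(u <- U) coef_of l u *: G u.
Proof.
move=> uU; elim: l => [|x l IH] lU.
  by rewrite big_nil big1 // => u _; rewrite /coef_of big_nil scale0r.
rewrite big_cons IH; last by move=> y yl; apply: lU; rewrite inE yl orbT.
under [RHS]eq_bigr => u _ do rewrite /coef_of big_cons scalerDl -scalerA.
rewrite big_split /= -scaler_sumr; congr (_ *: _ + _).
under eq_bigr do rewrite scaler_nat eq_sym.
by rewrite sum_seq_delta // lU ?mem_head.
Qed.

Lemma eq_na_eval f g v : na_coef f =1 na_coef g -> na_eval mul v f = na_eval mul v g.
Proof.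
move=> fg; rewrite !na_eval_terms.
set U := undup (map snd (terms f ++ terms g)).
have uU : uniq U by apply: undup_uniq.
rewrite !(sum_terms_coef_of _ uU) => [|y yg|y yf];
  rewrite ?mem_undup ?map_cat ?mem_cat ?yf ?yg ?orbT //.
by apply: eq_bigr => u _; rewrite -!coef_terms fg.
Qed.

Lemma conseq_is_identity S f :
  (forall g, inseq g S -> is_identity mul g) -> conseq S f -> is_identity mul f.
Proof.
move=> idS; elim=> {f} [g s gS v|v|f g _ IHf _ IHg v|c f _ IHf v|h f _ IHf v|h f _ IHf v
  |f g _ IHf fg v] /=.
- by rewrite na_eval_subst idS.
- by [].
- by rewrite IHf IHg addr0.
- by rewrite IHf scaler0.
- by rewrite IHf mul_zeror.
- by rewrite IHf mul_zerol.
- by rewrite -(eq_na_eval _ fg) IHf.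
Qed.
End Evaluation.
End FreeAlgebra.

(** * The divided power algebra *)

Lemma bin_trinomial a b c :
  ('C(a + b, b) * 'C(a + b + c, c) = 'C(b + c, c) * 'C(a + b + c, b + c))%N.
Proof.
have binf x y : ('C(x + y, y) * (y`! * x`!) = (x + y)`!)%N.
  by have := bin_fact (leq_addl x y); rewrite addnK.
have fact_gt0 : (0 < a`! * b`! * c`!)%N by rewrite !muln_gt0 !fact_gt0.
apply/eqP; rewrite -(eqn_pmul2r fact_gt0); apply/eqP.
transitivity ('C(a + b + c, c) * (c`! * ('C(a + b, b) * (b`! * a`!))))%N; first by ring.
rewrite binf binf.
transitivity ('C(a + (b + c), b + c) * ((b + c)`! * a`!) * 1)%N; last first.
  by rewrite -(binf b c) addnA; ring.
by rewrite binf addnA muln1.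
Qed.

Lemma prime_dvd_bin_exp p e k : prime p -> (0 < k < p ^ e)%N -> (p %| 'C(p ^ e, k))%N.
Proof.
move=> p_pr /andP[k_gt0 k_lt]; apply/negPn/negP => ndvd.
have cop : coprime (p ^ e) 'C(p ^ e, k) by apply: coprimeXl; rewrite prime_coprime.
have : (p ^ e %| k * 'C(p ^ e, k))%N.
  case: k k_gt0 k_lt {ndvd cop} => // k _ _.
  by rewrite -mul_bin_diag dvdn_mulr.
by rewrite (Gauss_dvdl _ cop) => /(dvdn_leq k_gt0); rewrite leqNgt k_lt.
Qed.

Section DividedPowers.
Variables (K : fieldType) (p m : nat).
Local Notation n := (p ^ m)%N.
Local Notation V := 'rV[K]_n.
Local Notation mul := (@dp_mul K p m).
Local Notation der := (@dp_der K p m).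

Definition dpx (k : nat) : V := \row_(j < n) ((j : nat) == k)%:R.

Lemma dpx_out k : (n <= k)%N -> dpx k = 0.
Proof.
move=> k_ge; apply/rowP => j; rewrite !mxE.
by case: eqP => // jk; move: (ltn_ord j); rewrite jk ltnNge k_ge.
Qed.

Lemma row_dpx (a : V) : a = \sum_(i < n) a 0 i *: dpx i.
Proof.
rewrite {1}(row_sum_delta a); apply: eq_bigr => i _; congr (_ *: _).
by apply/rowP => k; rewrite !mxE eqxx.
Qed.

Lemma sum_ord_delta (G : nat -> K) i :
  \sum_(a < n) ((a : nat) == i)%:R * G a = if (i < n)%N then G i else 0.
Proof.
transitivity (\sum_(a < n | (a : nat) == i) G a); last exact: big_ord1_eq.
rewrite [RHS]big_mkcond.
by apply: eq_bigr => a _; rewrite mulr_natl mulrb.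
Qed.

Lemma dp_mulDl : left_distributive mul +%R.
Proof.
move=> a b c; apply/rowP => k; rewrite !mxE -big_split; apply: eq_bigr => i _.
by rewrite -big_split; apply: eq_bigr => j _; rewrite !mxE /=; ring.
Qed.
Lemma dp_mulDr : right_distributive mul +%R.
Proof.
move=> a b c; apply/rowP => k; rewrite !mxE -big_split; apply: eq_bigr => i _.
by rewrite -big_split; apply: eq_bigr => j _; rewrite !mxE /=; ring.
Qed.
Lemma dp_mulZl x a b : mul (x *: a) b = x *: mul a b.
Proof.
apply/rowP => k; rewrite !mxE mulr_sumr; apply: eq_bigr => i _.
by rewrite mulr_sumr; apply: eq_bigr => j _; rewrite !mxE; ring.
Qed.
Lemma dp_mulZr x a b : mul a (x *: b) = x *: mul a b.
Proof.
apply/rowP => k; rewrite !mxE mulr_sumr; apply: eq_bigr => i _.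
by rewrite mulr_sumr; apply: eq_bigr => j _; rewrite !mxE; ring.
Qed.

Lemma dp_der_is_linear : linear der.
Proof.
move=> x a b; apply/rowP => k; rewrite !mxE mulr_sumr -big_split.
by apply: eq_bigr => i _; rewrite !mxE.
Qed.
HB.instance Definition _ := GRing.isLinear.Build K V V *:%R der dp_der_is_linear.

Lemma dp_mul_suml I r (P : pred I) (F : I -> V) b :
  mul (\sum_(i <- r | P i) F i) b = \sum_(i <- r | P i) mul (F i) b.
Proof.
have mul0l : mul 0 b = 0 by rewrite -[X in mul X _](scale0r (0 : V)) dp_mulZl scale0r.
exact: (big_morph (mul^~ b) (fun x y => dp_mulDl x y b) mul0l).
Qed.

Lemma dp_mul_sumr I r (P : pred I) (F : I -> V) a :
  mul a (\sum_(i <- r | P i) F i) = \sum_(i <- r | P i) mul a (F i).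
Proof.
have mul0r : mul a 0 = 0 by rewrite -[X in mul _ X](scale0r (0 : V)) dp_mulZr scale0r.
exact: (big_morph (mul a) (dp_mulDr a) mul0r).
Qed.

Lemma dp_mul_dpx i j :
  mul (dpx i) (dpx j) = (if (i + j < n)%N then 'C(i + j, j) else 0)%:R *: dpx (i + j).
Proof.
apply/rowP => k; rewrite !mxE.
transitivity (\sum_(a < n) ((a : nat) == i)%:R * \sum_(b < n) ((b : nat) == j)%:R *
   (((a + b)%N == k)%:R * ('C(a + b, b))%:R : K)).
  apply: eq_bigr => a _; rewrite big_mkcond mulr_sumr; apply: eq_bigr => b _.
  by rewrite !mxE; case: eqP => _ /=; rewrite ?mul0r ?mulr0 //; ring.
under eq_bigr => a _ do
  rewrite (sum_ord_delta (fun b => ((a + b)%N == k)%:R * ('C(a + b, b))%:R)).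
rewrite (sum_ord_delta (fun a => if (j < n)%N then ((a + j)%N == k)%:R * ('C(a + j, j))%:R else 0)).
have [ij_lt|ij_ge] := ltnP (i + j) n.
  rewrite (leq_ltn_trans (leq_addr j i) ij_lt) (leq_ltn_trans (leq_addl i j) ij_lt).
  by rewrite eq_sym mulrC.
have /negbTE-> : (i + j)%N != k by apply: contraTneq ij_ge => ->; rewrite -ltnNge.
by rewrite !mul0r !if_same.
Qed.

Lemma dp_der_dpx i : der (dpx i) = (0 < i < n)%N%:R *: dpx i.-1.
Proof.
apply/rowP => k; rewrite !mxE.
under eq_bigr => a _ do rewrite mxE.
rewrite (big_ord1_eq _ (fun a => (a == i)%:R)).
case: (ltnP k.+1 n) => hk; case: i => [|i] /=; rewrite ?mul0r //.
- by rewrite eqSS; case: eqP => [<-|_]; rewrite ?hk ?mul1r ?mulr0.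
- by case: eqP => [<-|_]; rewrite ?mulr0 // ltnNge hk mul0r.
Qed.

Lemma dp_mul_expand a b :
  mul a b = \sum_(i < n) \sum_(j < n) (a 0 i * b 0 j) *: mul (dpx i) (dpx j).
Proof.
rewrite {1}(row_dpx a) dp_mul_suml; apply: eq_bigr => i _.
rewrite dp_mulZl {1}(row_dpx b) dp_mul_sumr scaler_sumr; apply: eq_bigr => j _.
by rewrite dp_mulZr scalerA.
Qed.

Lemma dp_mulA : associative mul.
Proof.
have mulA_dpx i j l : mul (dpx i) (mul (dpx j) (dpx l)) = mul (mul (dpx i) (dpx j)) (dpx l).
  rewrite !dp_mul_dpx dp_mulZl dp_mulZr !dp_mul_dpx !scalerA addnA -!natrM.
  congr (_%:R *: _); case: (ltnP (i + j + l) n) => [ijl_lt|]; last by rewrite !muln0.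
  have -> : (i + j < n)%N by apply: leq_ltn_trans _ ijl_lt; rewrite leq_addr.
  have -> : (j + l < n)%N by apply: leq_ltn_trans _ ijl_lt; rewrite -addnA leq_addl.
  by rewrite bin_trinomial.
move=> a b c; rewrite (dp_mul_expand a b) dp_mul_suml {1}(row_dpx a) dp_mul_suml.
apply: eq_bigr => i _.
rewrite dp_mul_suml dp_mulZl (dp_mul_expand b c) dp_mul_sumr scaler_sumr; apply: eq_bigr => j _.
rewrite dp_mulZl {2}(row_dpx c) dp_mul_sumr scaler_sumr dp_mul_sumr scaler_sumr.
apply: eq_bigr => l _.
by rewrite !dp_mulZr !scalerA mulA_dpx; congr (_ *: _); ring.
Qed.

Lemma dp_mulC : commutative mul.
Proof.
have mulC_dpx i j : mul (dpx i) (dpx j) = mul (dpx j) (dpx i).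
  rewrite !dp_mul_dpx [(j + i)%N]addnC; case: ifP => // _.
  by rewrite -[in RHS]bin_sub ?leq_addr // addKn.
move=> a b; rewrite (dp_mul_expand a b) (dp_mul_expand b a) exchange_big.
by apply: eq_bigr => i _; apply: eq_bigr => j _; rewrite mulC_dpx mulrC.
Qed.

Lemma dp_mul1 : left_id (dpx 0) mul.
Proof.
move=> a; rewrite {1}(row_dpx a) dp_mul_sumr [RHS](row_dpx a); apply: eq_bigr => i _.
by rewrite dp_mulZr dp_mul_dpx add0n ltn_ord binn scale1r.
Qed.

Hypothesis pchar_p : p \in [pchar K].

(* When i + j = p^m the product x^(i) x^(j) is truncated to 0, while the
   right-hand side is C(p^m, j) x^(p^m - 2); it vanishes as p | C(p^m, j). *)
Lemma dp_der_mul_dpx i j : (i < n)%N -> (j < n)%N ->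
  der (mul (dpx i) (dpx j)) = mul (der (dpx i)) (dpx j) + mul (dpx i) (der (dpx j)).
Proof.
move=> i_lt j_lt.
rewrite dp_mul_dpx linearZ /= !dp_der_dpx dp_mulZl dp_mulZr !dp_mul_dpx.
rewrite !scalerA -!natrM.
case: i i_lt => [|i] i_lt; case: j j_lt => [|j] j_lt /=.
- by rewrite muln0 mul0n scale0r addr0.
- by rewrite !add0n j_lt (ltnW j_lt) !binn mul0n scale0r add0r.
- by rewrite !addn0 i_lt (ltnW i_lt) !bin0 mul0n scale0r addr0.
rewrite !addSn !addnS i_lt j_lt !mul1n -scalerDl -natrD; congr (_ *: _).
case: (ltnP (i + j).+2 n) => [lt2|]; first by rewrite (ltnW lt2) muln1 binS.
rewrite muln0; case: (ltnP (i + j).+1 n) => // lt1 ge2.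
have top : (i + j).+2 = n by apply/eqP; rewrite eqn_leq lt1 ge2.
rewrite -binS top; apply/esym/eqP; rewrite -(dvdn_pcharf pchar_p).
by apply: prime_dvd_bin_exp; [exact: pcharf_prime pchar_p | lia].
Qed.

Lemma dp_der_mul a b : der (mul a b) = mul (der a) b + mul a (der b).
Proof.
have derl : mul (der a) b = \sum_(i < n) \sum_(j < n) (a 0 i * b 0 j) *: mul (der (dpx i)) (dpx j).
  rewrite {1}(row_dpx a) linear_sum dp_mul_suml; apply: eq_bigr => i _.
  rewrite linearZ dp_mulZl {1}(row_dpx b) dp_mul_sumr scaler_sumr; apply: eq_bigr => j _.
  by rewrite dp_mulZr scalerA.
have derr : mul a (der b) = \sum_(i < n) \sum_(j < n) (a 0 i * b 0 j) *: mul (dpx i) (der (dpx j)).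
  rewrite {1}(row_dpx a) dp_mul_suml; apply: eq_bigr => i _.
  rewrite dp_mulZl {1}(row_dpx b) linear_sum dp_mul_sumr scaler_sumr; apply: eq_bigr => j _.
  by rewrite linearZ dp_mulZr scalerA.
rewrite (dp_mul_expand a b) derl derr linear_sum -big_split; apply: eq_bigr => i _.
rewrite linear_sum -big_split; apply: eq_bigr => j _.
by rewrite linearZ /= dp_der_mul_dpx // scalerDr.
Qed.
End DividedPowers.

Section DerivationOfProduct.
Variables (R : comPzRingType) (D : R -> R).
Hypothesis D_add : {morph D : x y / x + y}.
Hypothesis D_mul : forall x y, D (x * y) = D x * y + x * D y.

Lemma tortken_der_mul t1 t2 t3 t4 :
  let st x y := D (x * y) in
  st (st t1 t2) (st t3 t4) - st (st t1 t4) (st t3 t2) - st (st t1 (st t2 t3)) t4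
  + st (st (st t1 t2) t3) t4 + st (st t1 (st t4 t3)) t2 - st (st (st t1 t4) t3) t2 = 0.
Proof. by rewrite /=; do 6 rewrite ?(D_mul, D_add); ring. Qed.
End DerivationOfProduct.

Section DividedPowerRing.
Variables (K : fieldType) (p m : nat).

Definition dp_ring : Type := 'rV[K]_(p ^ m).
HB.instance Definition _ := GRing.Zmodule.on dp_ring.
HB.instance Definition _ := GRing.Zmodule_isComPzRing.Build dp_ring
  (@dp_mulA K p m) (@dp_mulC K p m) (@dp_mul1 K p m) (@dp_mulDl K p m).

Lemma tortken_identity : p \in [pchar K] -> is_identity (@dp_star K p m) (Tortken K).
Proof.
move=> pchar_p v /=; rewrite !scaleN1r.
exact: (@tortken_der_mul dp_ring _ (raddfD _) (dp_der_mul pchar_p)).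
Qed.

Lemma com_identity : is_identity (@dp_star K p m) (Com K).
Proof. by move=> v /=; rewrite scaleN1r /dp_star dp_mulC subrr. Qed.
End DividedPowerRing.

Section CharacteristicThree.
Variable K : fieldType.
Hypothesis pchar3 : 3 \in [pchar K].
Local Notation V := 'rV[K]_(3 ^ 1).
Local Notation o0 := (ord0 : 'I_(3 ^ 1)).
Local Notation o1 := (lift ord0 ord0 : 'I_(3 ^ 1)).
Local Notation o2 := (lift ord0 (lift ord0 ord0) : 'I_(3 ^ 1)).

Lemma dp_star_char3 (a b : V) : dp_star a b =
  \row_(k < 3 ^ 1) nth 0 [:: a 0 o1 * b 0 o0 + a 0 o0 * b 0 o1;
                             a 0 o2 * b 0 o0 - a 0 o1 * b 0 o1 + a 0 o0 * b 0 o2; 0] k.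
Proof.
have two : (2%:R : K) = -1.
  by apply/eqP; rewrite -subr_eq0 opprK -(natrD _ 2 1) -(dvdn_pcharf pchar3).
apply/rowP => k; rewrite !mxE big_mkcond /= !big_ord_recl big_ord0 /=.
case: k => [[|[|[|k]]] hk] /=; rewrite ?big_mkcond /= ?big_ord_recl ?big_ord0 /= ?mxE /=.
all: try (under eq_bigr => i _ do rewrite big_mkcond; rewrite /= !big_ord_recl !big_ord0 /=).
all: rewrite /bump /= ?add0n ?addn0 ?binn ?bin0 ?bin1 //.
- by ring.
- by rewrite two; ring.
- by rewrite !addr0.
Qed.

Lemma tortken'_identity : is_identity (@dp_star K 3 1) (Tortken' K).
Proof.
have three : (3%:R : K) = 0 by apply/eqP; rewrite -(dvdn_pcharf pchar3).
(* [ring: three] would only cancel the coefficient 3 itself, not its multiples. *)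
move=> v /=; rewrite !dp_star_char3; apply/rowP => k; rewrite !mxE.
move: (v 1%N 0 o0) (v 1%N 0 o1) (v 1%N 0 o2) (v 2%N 0 o0) (v 2%N 0 o1) (v 2%N 0 o2)
  (v 3%N 0 o0) (v 3%N 0 o1) (v 3%N 0 o2) (v 4%N 0 o0) (v 4%N 0 o1) (v 4%N 0 o2)
  => a0 a1 a2 b0 b1 b2 c0 c1 c2 d0 d1 d2.
case: k => [[|[|[|k]]] hk] //=.
- transitivity (3%:R * (a2 * b1 * c0 * d0 + a0 * b1 * c2 * d0 + a0 * b0 * c2 * d1
    + a1 * b2 * c0 * d0 + a1 * b0 * c0 * d2 + a0 * b0 * c1 * d2 + a2 * b0 * c1 * d0
    + a0 * b2 * c0 * d1)); first by ring.
  by rewrite three mul0r.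
- transitivity (3%:R * (- 2%:R * a1 * b1 * c1 * d1 + a1 * b0 * c1 * d2
    + a0 * b1 * c2 * d1 + a2 * b1 * c1 * d0 + a1 * b2 * c0 * d1)); first by ring.
  by rewrite three mul0r.
- by rewrite !addr0.
Qed.
End CharacteristicThree.

(** * Consequences of Com, Tortken and Tortken' *)

(* Integer combinations of monomials, so that certificates can be checked by
   computation; [eqmod_zterms 0] compares coefficients exactly. *)
Definition zterms := seq (int * nterm).

Fixpoint zcoef (s : zterms) (u : nterm) : int :=
  if s is x :: s' then (if x.2 == u then x.1 else 0) + zcoef s' u else 0.

Definition zscale (c : int) (s : zterms) : zterms := [seq (c * x.1, x.2) | x <- s].

Definition eqmod_zterms (q : nat) (s1 s2 : zterms) : bool :=
  all (fun u => ((zcoef s1 u - zcoef s2 u) %% q)%Z == 0) (map snd (s1 ++ s2)).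

Lemma zcoef_cat s1 s2 u : zcoef (s1 ++ s2) u = zcoef s1 u + zcoef s2 u.
Proof. by elim: s1 => [|x s1 IH] /=; rewrite ?add0r // IH addrA. Qed.

Lemma zcoef_zscale c s u : zcoef (zscale c s) u = c * zcoef s u.
Proof. by elim: s => [|x s IH] /=; rewrite ?mulr0 // IH mulrDr; case: eqP; rewrite ?mulr0. Qed.

Lemma zcoef_notin s u : u \notin map snd s -> zcoef s u = 0.
Proof.
elim: s => [|x s IH] //=; rewrite inE negb_or => /andP[xu su].
by rewrite IH // eq_sym (negbTE xu) add0r.
Qed.

Fixpoint nterm_le (a b : nterm) : bool :=
  match a, b with
  | NVar i, NVar j => (i <= j)%N
  | NVar _, NMul _ _ => true
  | NMul _ _, NVar _ => false
  | NMul a1 a2, NMul b1 b2 => if a1 == b1 then nterm_le a2 b2 else nterm_le a1 b1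
  end.

Fixpoint comm_canon (t : nterm) : nterm :=
  match t with
  | NVar i => NVar i
  | NMul a b =>
    let a' := comm_canon a in let b' := comm_canon b in
    if nterm_le a' b' then NMul a' b' else NMul b' a'
  end.

Definition canon_zterms (s : zterms) : zterms := [seq (x.1, comm_canon x.2) | x <- s].

Section Instances.
Variable f : nat -> nat.
Local Notation "'t' k" := (NVar (f k)) (at level 2, k at level 1).
Local Infix "**" := NMul (at level 40, left associativity).

Definition tortken_inst : zterms :=
  [:: (1, (t 1 ** t 2) ** (t 3 ** t 4)); (-1, (t 1 ** t 4) ** (t 3 ** t 2));
      (-1, (t 1 ** (t 2 ** t 3)) ** t 4); (1, ((t 1 ** t 2) ** t 3) ** t 4);
      (1, (t 1 ** (t 4 ** t 3)) ** t 2); (-1, ((t 1 ** t 4) ** t 3) ** t 2)]%Z.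

Definition tortken'_inst : zterms :=
  [:: (1, (t 1 ** t 3) ** (t 2 ** t 4)); (1, (t 1 ** t 4) ** (t 2 ** t 3));
      (1, ((t 1 ** t 3) ** t 4) ** t 2); (1, ((t 1 ** t 4) ** t 2) ** t 3);
      (1, ((t 2 ** t 3) ** t 1) ** t 4); (1, ((t 2 ** t 4) ** t 3) ** t 1)]%Z.
End Instances.

(* Variables are numbered from 1: [nth1 l i] is the [i]-th item of [l]. *)
Definition nth1 (l : seq nat) (i : nat) : nat := nth 0%N (0%N :: l) i.

(* A generator [(b, l)] stands for Tortken (b = false) or Tortken' (b = true)
   with each t_i replaced by t_(nth1 l i). *)
Definition generator := (bool * seq nat)%type.

Definition gen_inst (g : generator) : zterms :=
  if g.1 then tortken'_inst (nth1 g.2) else tortken_inst (nth1 g.2).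

Definition gen_combination (L : seq (int * generator)) : zterms :=
  flatten [seq zscale x.1 (canon_zterms (gen_inst x.2)) | x <- L].

Section Consequences.
Variable K : fieldType.

Definition napoly_of_zterms (s : zterms) : napoly K :=
  napoly_of_terms [seq (x.1%:~R, x.2) | x <- s].

Lemma coef_napoly_of_zterms s u : na_coef (napoly_of_zterms s) u = (zcoef s u)%:~R.
Proof.
rewrite coef_napoly_of_terms /coef_of big_map.
elim: s => [|x s IH]; rewrite ?big_nil // big_cons IH /= intrD.
by case: eqP; rewrite ?mulr1 ?mulr0.
Qed.

Lemma eqmod_zcoef (q : nat) s1 s2 u : (q%:R : K) = 0 -> eqmod_zterms q s1 s2 ->
  (zcoef s1 u)%:~R = (zcoef s2 u)%:~R :> K.
Proof.
move=> q0 /allP eq12; have [us|us] := boolP (u \in map snd (s1 ++ s2)); last first.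
  by move: us; rewrite map_cat mem_cat negb_or => /andP[u1 u2]; rewrite !zcoef_notin.
apply/eqP; rewrite -subr_eq0 -intrB (divz_eq (_ - _) q) (eqP (eq12 u us)) addr0 intrM.
by rewrite -pmulrn q0 mulr0.
Qed.

Variable S : seq (napoly K).

Definition napoly_sum (T : Type) (F : T -> napoly K) (l : seq T) : napoly K :=
  foldr (fun t g => PAdd (F t) g) PZero l.

Lemma coef_napoly_sum T (F : T -> napoly K) l u :
  na_coef (napoly_sum F l) u = \sum_(t <- l) na_coef (F t) u.
Proof. by elim: l => [|t l IH]; rewrite ?big_nil // big_cons /= IH. Qed.

Lemma conseq_napoly_sum (T : eqType) (F : T -> napoly K) l :
  (forall t, t \in l -> conseq S (F t)) -> conseq S (napoly_sum F l).
Proof.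
elim: l => [|t l IH] Fl /=; first exact: conseq_zero.
apply: conseq_add; first by apply: Fl; rewrite mem_head.
by apply: IH => x xl; apply: Fl; rewrite inE xl orbT.
Qed.

Lemma conseq_zterms_cat s1 s2 : conseq S (napoly_of_zterms s1) ->
  conseq S (napoly_of_zterms s2) -> conseq S (napoly_of_zterms (s1 ++ s2)).
Proof.
move=> c1 c2; apply: conseq_ext (conseq_add c1 c2) _ => u.
by rewrite /= !coef_napoly_of_zterms zcoef_cat intrD.
Qed.

Lemma conseq_zscale c s : conseq S (napoly_of_zterms s) ->
  conseq S (napoly_of_zterms (zscale c s)).
Proof.
move=> cs; apply: conseq_ext (conseq_scale c%:~R cs) _ => u.
by rewrite /= !coef_napoly_of_zterms zcoef_zscale intrM.
Qed.

Hypothesis Com_S : inseq (Com K) S.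

Lemma conseq_comm_canon t :
  conseq S (napoly_of_zterms [:: (1%Z, t); ((-1)%Z, comm_canon t)]).
Proof.
elim: t => [i|a IHa b IHb].
  by apply: conseq_ext (conseq_zero S) _ => u /=; ring.
have {}IHa := conseq_mulr (monomial K b) IHa.
have {}IHb := conseq_mull (monomial K (comm_canon a)) IHb.
have swap := @conseq_gen _ S _
  (fun i => if i == 1%N then monomial K (comm_canon a) else monomial K (comm_canon b)) Com_S.
rewrite [comm_canon _]/=; case: ifP => _; [apply: conseq_ext (conseq_add IHa IHb) _
                           | apply: conseq_ext (conseq_add (conseq_add IHa IHb) swap) _].
all: by move=> [j|x y] /=; rewrite ?coef_monomial; ring.
Qed.

Lemma conseq_sub_canon s :
  conseq S (napoly_of_zterms (s ++ zscale (-1) (canon_zterms s))).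
Proof.
elim: s => [|x s IH]; first exact: conseq_zero.
apply: conseq_ext (conseq_zterms_cat (conseq_zscale x.1 (conseq_comm_canon x.2)) IH) _.
move=> u; rewrite !coef_napoly_of_zterms; congr intr.
rewrite !(zcoef_cat, zcoef_zscale) /=.
by do 2 case: eqP => _; ring.
Qed.

Lemma conseq_canon_zterms s :
  conseq S (napoly_of_zterms s) -> conseq S (napoly_of_zterms (canon_zterms s)).
Proof.
move=> cs; apply: conseq_ext (conseq_zterms_cat cs (conseq_zscale (-1) (conseq_sub_canon s))) _.
by move=> u; rewrite !coef_napoly_of_zterms !(zcoef_cat, zcoef_zscale); congr intr; ring.
Qed.

Hypothesis Tortken_S : inseq (Tortken K) S.

Lemma conseq_gen_inst (g : generator) :
  (g.1 -> inseq (Tortken' K) S) -> conseq S (napoly_of_zterms (gen_inst g)).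
Proof.
case: g => [b l] /= Tk'; pose s i : napoly K := PVar (nth1 l i).
have gS : inseq (if b then Tortken' K else Tortken K) S by case: b Tk' => // /(_ isT).
apply: conseq_ext (conseq_gen s gS) _ => u.
rewrite coef_terms /napoly_of_zterms coef_napoly_of_terms /coef_of /s.
by case: b {Tk' gS} => /=; rewrite !big_cons big_nil /=; ring.
Qed.

Lemma conseq_gen_combination (L : seq (int * generator)) :
  (forall x, x \in L -> x.2.1 -> inseq (Tortken' K) S) ->
  conseq S (napoly_of_zterms (gen_combination L)).
Proof.
elim: L => [|x L IH] LS; first exact: conseq_zero.
apply: conseq_zterms_cat; last by apply: IH => y yL; apply: LS; rewrite inE yL orbT.
by apply/conseq_zscale/conseq_canon_zterms/conseq_gen_inst/LS; rewrite inE eqxx.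
Qed.
End Consequences.

(** * Multilinear monomials and their values at basis vectors *)

(* [fuel] only has to bound [size s]; it makes the recursion structural. *)
Fixpoint bracketings (fuel : nat) (s : seq nat) : seq nterm :=
  if fuel is fuel'.+1 then
    if s is [:: x] then [:: NVar x] else
    flatten [seq [seq NMul a b | a <- bracketings fuel' (take k s),
                                 b <- bracketings fuel' (drop k s)]
            | k <- iota 1 (size s).-1]
  else [::].

Definition multilinear_monomials : seq nterm :=
  flatten [seq bracketings 4 s | s <- permutations [:: 1; 2; 3; 4]%N].

Lemma size_leaves_gt0 t : (0 < size (leaves t))%N.
Proof. by elim: t => //= a IHa b _; rewrite size_cat addn_gt0 IHa. Qed.

Lemma mem_bracketings u fuel : (size (leaves u) <= fuel)%N -> u \in bracketings fuel (leaves u).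
Proof.
elim: u fuel => [i|a IHa b IHb] [|fuel] //=; first by rewrite inE.
  by rewrite size_cat; have := size_leaves_gt0 a; lia.
rewrite size_cat => ab_le; have a_gt0 := size_leaves_gt0 a; have b_gt0 := size_leaves_gt0 b.
case Eab: (leaves a ++ leaves b) (size_cat (leaves a) (leaves b)) => [|y [|z s]] /= ab_size.
- lia.
- lia.
rewrite -Eab; apply/flattenP; set k := size (leaves a).
exists [seq NMul a0 b0 | a0 <- bracketings fuel (take k (leaves a ++ leaves b)),
                         b0 <- bracketings fuel (drop k (leaves a ++ leaves b))].
  by apply: (map_f (fun k => [seq NMul a0 b0 | a0 <- _, b0 <- _])); rewrite mem_iota; lia.
rewrite take_size_cat // drop_size_cat //.
by apply: allpairs_f; [apply: IHa | apply: IHb]; lia.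
Qed.

Lemma multilinear_monomialsP u :
  perm_eq (leaves u) [:: 1; 2; 3; 4]%N -> u \in multilinear_monomials.
Proof.
move=> u_perm; apply/flattenP; exists (bracketings 4 (leaves u)).
  by apply: map_f; rewrite mem_permutations.
by apply: mem_bracketings; rewrite (perm_size u_perm).
Qed.

Lemma uniq_multilinear_monomials : uniq multilinear_monomials.
Proof. by vm_compute. Qed.

(* Evaluating a monomial [t] at t_i := x^(w i) in O_1 with [N] basis vectors
   gives [x_coef N w t] times x^(x_weight w t). *)
Section BasisEvaluation.
Variable w : nat -> nat.

Fixpoint x_weight (t : nterm) : nat :=
  match t with NVar i => w i | NMul a b => (x_weight a + x_weight b).-1 end.

Fixpoint x_coef (N : nat) (t : nterm) : nat :=
  match t with
  | NVar i => (w i < N)%N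
  | NMul a b => (x_coef N a * x_coef N b *
      (if (0 < x_weight a + x_weight b < N)%N then 'C(x_weight a + x_weight b, x_weight b)
       else 0))%N
  end.

Fixpoint x_maxweight (t : nterm) : nat :=
  match t with
  | NVar i => w i
  | NMul a b => maxn (maxn (x_maxweight a) (x_maxweight b)) (x_weight a + x_weight b)
  end.

Lemma x_coef_trunc N1 N2 t :
  (x_maxweight t < N1)%N -> (x_maxweight t < N2)%N -> x_coef N1 t = x_coef N2 t.
Proof.
elim: t => [i|a IHa b IHb] /=; first by move=> -> ->.
rewrite !gtn_max => /andP[/andP[a1 b1] ab1] /andP[/andP[a2 b2] ab2].
by rewrite IHa // IHb // ab1 ab2 !andbT.
Qed.
End BasisEvaluation.

Section StarOnBasis.
Variables (K : fieldType) (p m : nat).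
Local Notation n := (p ^ m)%N.
Local Notation star := (@dp_star K p m).
Local Notation dpx := (@dpx K p m).

Lemma dp_starDl : left_distributive star +%R.
Proof. by move=> a b c; rewrite /dp_star dp_mulDl raddfD. Qed.
Lemma dp_starDr : right_distributive star +%R.
Proof. by move=> a b c; rewrite /dp_star dp_mulDr raddfD. Qed.
Lemma dp_starZl x a b : star (x *: a) b = x *: star a b.
Proof. by rewrite /dp_star dp_mulZl linearZ. Qed.
Lemma dp_starZr x a b : star a (x *: b) = x *: star a b.
Proof. by rewrite /dp_star dp_mulZr linearZ. Qed.

Lemma dp_star_dpx i j : star (dpx i) (dpx j) =
  (if (0 < i + j < n)%N then 'C(i + j, j) else 0)%:R *: dpx (i + j).-1.
Proof.
rewrite /dp_star dp_mul_dpx linearZ /= dp_der_dpx scalerA -natrM; congr (_%:R *: _).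
by case: (i + j < n)%N; case: (0 < i + j)%N; rewrite ?muln1 ?muln0.
Qed.

Lemma nterm_eval_dpx w t :
  nterm_eval star (fun i => dpx (w i)) t = (x_coef w n t)%:R *: dpx (x_weight w t).
Proof.
elim: t => [i|a IHa b IHb] /=.
  by case: ltnP => [|w_ge]; rewrite ?scale1r // dpx_out // scale0r.
by rewrite IHa IHb dp_starZl dp_starZr dp_star_dpx !scalerA -!natrM.
Qed.
End StarOnBasis.

Definition dotz (a b : seq int) : int := foldr (fun z acc => z.1 * z.2 + acc) 0 (zip a b).

Lemma left_inverse_kernel (K : fieldType) (I T : eqType) (Y : seq T) (W : seq I)
    (M : I -> T -> int) (L : T -> seq int) (d : int) (B : T -> K) :
  uniq Y -> d%:~R != 0 :> K ->
  (forall w, w \in W -> \sum_(y <- Y) B y * (M w y)%:~R = 0) ->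
  all (fun x => all (fun y => dotz (L x) [seq M w y | w <- W] == d * (x == y)%:Z) Y) Y ->
  forall x, x \in Y -> B x = 0.
Proof.
move=> uY d0 MB0 /allP LM x xY.
have dotz_MB0 a ws : {subset ws <= W} ->
    \sum_(y <- Y) B y * (dotz a [seq M w y | w <- ws])%:~R = 0.
  elim: a ws => [|c a IH] [|w ws] wsW; try by rewrite big1 // => y _; rewrite mulr0.
  transitivity (c%:~R * \sum_(y <- Y) B y * (M w y)%:~R
                + \sum_(y <- Y) B y * (dotz a [seq M v y | v <- ws])%:~R).
    rewrite mulr_sumr -big_split; apply: eq_bigr => y _ /=.
    by rewrite intrD intrM; ring.
  rewrite MB0 ?wsW ?mem_head // IH ?mulr0 ?addr0 // => v vws.
  by rewrite wsW // inE vws orbT.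
have := dotz_MB0 (L x) W (fun w wW => wW).
rewrite big_seq (eq_bigr (fun y => B y * d%:~R *+ (y == x))) => [|y yY]; last first.
  by rewrite (eqP (allP (LM x xY) y yY)) intrM eq_sym mulrA mulr_natr.
rewrite -big_seq sum_seq_delta // xY => /eqP.
by rewrite mulf_eq0 (negbTE d0) orbF => /eqP.
Qed.

(** * Completeness from certificates *)

Definition napoly_on (K : fieldType) (Y : seq nterm) (B : nterm -> K) : napoly K :=
  napoly_of_terms [seq (B y, y) | y <- Y].

(* The coefficient of x^(|l| - 3) in y(x^(l_1), ..., x^(l_4)), computed with [N]
   basis vectors; it is the only possibly nonzero one for a multilinear y. *)
Definition basis_coef (N : nat) (l : seq nat) (y : nterm) : int :=
  (x_coef (nth1 l) N y * (x_weight (nth1 l) y == sumn l - 3))%N.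

Section Completeness.
Variables (K : fieldType) (p m : nat) (S : seq (napoly K)).
Local Notation star := (@dp_star K p m).
Hypothesis S_identities : forall g, inseq g S -> is_identity star g.
Hypothesis Com_S : inseq (Com K) S.
Hypothesis Tortken_S : inseq (Tortken K) S.
Variable use' : bool.
Hypothesis Tortken'_S : use' -> inseq (Tortken' K) S.
Variable q : nat.
Hypothesis q0 : (q%:R : K) = 0.

Variables (canon_monos normal_monos : seq nterm) (normal_form : nterm -> zterms)
  (normal_cert : nterm -> seq (int * generator)).
Hypothesis canon_monosP : all (fun t => comm_canon t \in canon_monos) multilinear_monomials.
Hypothesis normal_certP : all (fun u =>
  eqmod_zterms q (gen_combination (normal_cert u)) ((1%Z, u) :: zscale (-1) (normal_form u)))
  canon_monos.
Hypothesis normal_cert_gens : all (fun u => all (fun x => use' || ~~ x.2.1) (normal_cert u))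
  canon_monos.
Hypothesis normal_form_supp : all (fun u => all (fun x => x.2 \in normal_monos) (normal_form u))
  canon_monos.
Hypothesis uniq_normal_monos : uniq normal_monos.

Variables (tests : seq (seq nat)) (N0 : nat) (inverse : nterm -> seq int) (d : int).
Hypothesis test_trunc : forall w t, w \in tests -> t \in normal_monos ->
  x_coef (nth1 w) (p ^ m) t = x_coef (nth1 w) N0 t.
Hypothesis test_small : forall w, w \in tests -> (sumn w - 3 < p ^ m)%N.
Hypothesis d_unit : d%:~R != 0 :> K.
Hypothesis inverseP : all (fun x => all (fun y =>
  dotz (inverse x) [seq basis_coef N0 w y | w <- tests] == d * (x == y)%:Z) normal_monos)
  normal_monos.

Local Notation MON := multilinear_monomials.
Local Notation NF t := (normal_form (comm_canon t)).

Lemma conseq_normal_form t : t \in MON ->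
  conseq S (napoly_of_zterms K ((1%Z, t) :: zscale (-1) (NF t))).
Proof.
move=> tM; have tC := allP canon_monosP t tM.
have cert : conseq S (napoly_of_zterms K ((1%Z, comm_canon t) :: zscale (-1) (NF t))).
  apply: conseq_ext (conseq_gen_combination Com_S Tortken_S _) _ => [x xL x1 | u].
    by apply: Tortken'_S; move: (allP (allP normal_cert_gens _ tC) x xL); rewrite x1 orbF.
  by rewrite !coef_napoly_of_zterms (eqmod_zcoef _ q0 (allP normal_certP _ tC)).
apply: conseq_ext (conseq_zterms_cat (conseq_comm_canon Com_S t) cert) _ => u.
rewrite !coef_napoly_of_zterms zcoef_cat /=; congr intr.
by case: (comm_canon t == u); ring.
Qed.

Lemma zcoef_normal t u : t \in MON ->
  (zcoef (NF t) u)%:~R = \sum_(y <- normal_monos) (zcoef (NF t) y)%:~R * (y == u)%:R :> K.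
Proof.
move=> tM; under eq_bigr do rewrite mulr_natr.
rewrite sum_seq_delta //; case: ifP => // /negbT uN.
rewrite zcoef_notin //; apply: contra uN => /mapP[x xs ->].
exact: (allP (allP normal_form_supp _ (allP canon_monosP t tM)) x xs).
Qed.

Lemma multilin4_normal_form f : multilin4 f ->
  exists B, conseq S (PAdd f (PScale (-1) (napoly_on normal_monos B))).
Proof.
move=> f_ml; pose c := na_coef f.
exists (fun y => \sum_(t <- MON) c t * (zcoef (NF t) y)%:~R).
pose R := napoly_sum (fun t =>
  PScale (c t) (napoly_of_zterms K ((1%Z, t) :: zscale (-1) (NF t)))) MON.
have cR : conseq S R by apply: conseq_napoly_sum => t tM; apply/conseq_scale/conseq_normal_form.
apply: conseq_ext cR _ => u; rewrite [RHS]/=.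
have -> : na_coef R u = \sum_(t <- MON) c t * (t == u)%:R
                        - \sum_(t <- MON) c t * (zcoef (NF t) u)%:~R.
  rewrite coef_napoly_sum -sumrB; apply: eq_bigr => t _ /=.
  by rewrite coef_napoly_of_zterms coef_monomial zcoef_zscale intrM; ring.
have -> : \sum_(t <- MON) c t * (t == u)%:R = c u.
  under eq_bigr do rewrite mulr_natr.
  rewrite sum_seq_delta ?uniq_multilinear_monomials //; case: ifP => // /negbT uM.
  by apply/esym/eqP; apply: contraNT uM => /f_ml/multilinear_monomialsP.
rewrite /napoly_on coef_napoly_of_terms /coef_of big_map.
suff -> : \sum_(y <- normal_monos) (\sum_(t <- MON) c t * (zcoef (NF t) y)%:~R) * (y == u)%:R
    = \sum_(t <- MON) c t * (zcoef (NF t) u)%:~R by rewrite /c; ring.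
under eq_bigr do rewrite mulr_suml.
rewrite exchange_big; apply: eq_big_seq => t tM.
by rewrite zcoef_normal // mulr_sumr; apply: eq_bigr => y _; rewrite mulrA.
Qed.

Lemma normal_identity_eq0 B : is_identity star (napoly_on normal_monos B) ->
  forall y, y \in normal_monos -> B y = 0.
Proof.
move=> QB; apply: (left_inverse_kernel uniq_normal_monos d_unit _ inverseP) => w wW.
have := QB (fun i => dpx K p m (nth1 w i)).
rewrite na_eval_napoly_of_terms big_map.
under eq_bigr => y _ do rewrite nterm_eval_dpx scalerA.
move/rowP => /(_ (Ordinal (test_small wW))); rewrite !mxE summxE => h.
rewrite -[RHS]h big_seq [RHS]big_seq; apply: eq_bigr => y yN.
by rewrite !mxE /basis_coef -pmulrn natrM -mulrA (test_trunc wW yN) eq_sym.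
Qed.

Theorem multilin4_identity_conseq f : multilin4 f -> is_identity star f -> conseq S f.
Proof.
move=> f_ml f_id; have [B fQ] := multilin4_normal_form f_ml.
have Q_id : is_identity star (napoly_on normal_monos B).
  move=> v; have := conseq_is_identity (@dp_starDl K p m) (@dp_starDr K p m)
    (@dp_starZl K p m) (@dp_starZr K p m) S_identities fQ v.
  by rewrite /= f_id add0r scaleN1r => /eqP; rewrite oppr_eq0 => /eqP.
apply: conseq_ext fQ _ => u /=.
rewrite /napoly_on coef_napoly_of_terms /coef_of big_map big_seq big1 ?mulr0 ?addr0 // => y yN.
by rewrite (normal_identity_eq0 Q_id) // mul0r.
Qed.
End Completeness.

(** * The certificates *)

(* Suffix [_big]: the case p^m >= 5; suffix [_31]: the case (p, m) = (3, 1).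
   The default branches of [normal_form_*] cover the normal monomials. *)
Section Certificates.
Local Notation x1 := (NVar 1).
Local Notation x2 := (NVar 2).
Local Notation x3 := (NVar 3).
Local Notation x4 := (NVar 4).
Local Infix "**" := NMul (at level 40, left associativity).
Local Notation Tk l := (false, l%N).
Local Notation Tk' l := (true, l%N).

Definition canon_monos : seq nterm :=
  [:: (x1 ** x2) ** (x3 ** x4); (x1 ** x3) ** (x2 ** x4); (x1 ** x4) ** (x2 ** x3);
      x1 ** (x2 ** (x3 ** x4)); x1 ** (x3 ** (x2 ** x4)); x1 ** (x4 ** (x2 ** x3));
      x2 ** (x1 ** (x3 ** x4)); x2 ** (x3 ** (x1 ** x4)); x2 ** (x4 ** (x1 ** x3));
      x3 ** (x1 ** (x2 ** x4)); x3 ** (x2 ** (x1 ** x4)); x3 ** (x4 ** (x1 ** x2));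
      x4 ** (x1 ** (x2 ** x3)); x4 ** (x2 ** (x1 ** x3)); x4 ** (x3 ** (x1 ** x2))].

Definition normal_monos_big : seq nterm :=
  [:: (x1 ** x4) ** (x2 ** x3); x1 ** (x4 ** (x2 ** x3)); x2 ** (x1 ** (x3 ** x4));
      x2 ** (x4 ** (x1 ** x3)); x3 ** (x1 ** (x2 ** x4)); x3 ** (x2 ** (x1 ** x4));
      x3 ** (x4 ** (x1 ** x2)); x4 ** (x1 ** (x2 ** x3)); x4 ** (x2 ** (x1 ** x3));
      x4 ** (x3 ** (x1 ** x2))].

Definition normal_form_big (u : nterm) : zterms :=
  if u == (x1 ** x2) ** (x3 ** x4) then
    [:: (1, (x1 ** x4) ** (x2 ** x3)); (-1, x2 ** (x1 ** (x3 ** x4)));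
        (1, x2 ** (x4 ** (x1 ** x3))); (1, x3 ** (x2 ** (x1 ** x4)));
        (-1, x3 ** (x4 ** (x1 ** x2))); (1, x4 ** (x1 ** (x2 ** x3)));
        (-1, x4 ** (x2 ** (x1 ** x3)))]%Z else
  if u == (x1 ** x3) ** (x2 ** x4) then
    [:: (1, (x1 ** x4) ** (x2 ** x3)); (-1, x3 ** (x1 ** (x2 ** x4)));
        (1, x3 ** (x2 ** (x1 ** x4))); (1, x4 ** (x1 ** (x2 ** x3)));
        (-1, x4 ** (x2 ** (x1 ** x3)))]%Z else
  if u == x1 ** (x2 ** (x3 ** x4)) then
    [:: (1, x1 ** (x4 ** (x2 ** x3))); (1, x2 ** (x1 ** (x3 ** x4)));
        (-1, x2 ** (x4 ** (x1 ** x3))); (-1, x4 ** (x1 ** (x2 ** x3)));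
        (1, x4 ** (x2 ** (x1 ** x3)))]%Z else
  if u == x1 ** (x3 ** (x2 ** x4)) then
    [:: (1, x1 ** (x4 ** (x2 ** x3))); (1, x3 ** (x1 ** (x2 ** x4)));
        (-1, x3 ** (x4 ** (x1 ** x2))); (-1, x4 ** (x1 ** (x2 ** x3)));
        (1, x4 ** (x3 ** (x1 ** x2)))]%Z else
  if u == x2 ** (x3 ** (x1 ** x4)) then
    [:: (1, x2 ** (x4 ** (x1 ** x3))); (1, x3 ** (x2 ** (x1 ** x4)));
        (-1, x3 ** (x4 ** (x1 ** x2))); (-1, x4 ** (x2 ** (x1 ** x3)));
        (1, x4 ** (x3 ** (x1 ** x2)))]%Z else
  [:: (1%Z, u)].

Definition normal_cert_big (u : nterm) : seq (int * generator) :=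
  if u == (x1 ** x2) ** (x3 ** x4) then [:: (1, Tk [:: 1; 2; 4; 3]); (1, Tk [:: 1; 3; 2; 4])]%Z else
  if u == (x1 ** x3) ** (x2 ** x4) then [:: (1, Tk [:: 1; 3; 2; 4])]%Z else
  if u == x1 ** (x2 ** (x3 ** x4)) then
    [:: (-1, Tk [:: 1; 2; 4; 3]); (-1, Tk [:: 1; 3; 2; 4]); (1, Tk [:: 2; 1; 4; 3])]%Z else
  if u == x1 ** (x3 ** (x2 ** x4)) then
    [:: (-1, Tk [:: 1; 3; 2; 4]); (-1, Tk [:: 2; 1; 3; 4]); (1, Tk [:: 2; 1; 4; 3])]%Z else
  if u == x2 ** (x3 ** (x1 ** x4)) then
    [:: (-1, Tk [:: 1; 2; 3; 4]); (1, Tk [:: 1; 2; 4; 3]); (1, Tk [:: 1; 3; 2; 4])]%Z else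
  [::].

Definition tests_big : seq (seq nat) :=
  [:: [:: 1; 2; 0; 1]; [:: 0; 0; 4; 0]; [:: 1; 1; 1; 1]; [:: 3; 0; 0; 0]; [:: 1; 2; 1; 0];
      [:: 0; 0; 1; 2]; [:: 0; 2; 1; 0]; [:: 1; 3; 1; 1]; [:: 3; 1; 1; 0]; [:: 0; 2; 0; 2]].

Definition inverse_big (u : nterm) : seq int :=
  if u == (x1 ** x4) ** (x2 ** x3) then [:: -80; -64; 44; 320; 112; -80; -288; 6; -64; 16]%Z else
  if u == x1 ** (x4 ** (x2 ** x3)) then [:: -120; 0; 26; 640; 168; -56; -368; 9; -96; 56]%Z else
  if u == x2 ** (x1 ** (x3 ** x4)) then [:: -8; 64; -10; 192; 88; 56; -144; -1; -32; 8]%Z else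
  if u == x2 ** (x4 ** (x1 ** x3)) then [:: 104; -64; -30; -960; -376; 40; 592; 5; 160; -104]%Z else
  if u == x3 ** (x1 ** (x2 ** x4)) then [:: 56; 0; -42; -576; -168; 56; 304; -1; 96; 8]%Z else
  if u == x3 ** (x2 ** (x1 ** x4)) then [:: 64; -64; 32; 0; 0; 0; 192; -16; 0; 0]%Z else
  if u == x3 ** (x4 ** (x1 ** x2)) then [:: -56; 128; 10; 576; 168; -56; -432; 9; -96; -8]%Z else
  if u == x4 ** (x1 ** (x2 ** x3)) then [:: 152; 0; -2; -704; -200; 24; 496; -13; 96; -88]%Z else
  if u == x4 ** (x2 ** (x1 ** x3)) then [:: -128; 128; 16; 832; 320; -64; -576; 0; -128; 128]%Z else
  if u == x4 ** (x3 ** (x1 ** x2)) then [:: 16; -128; -28; -320; -112; 80; 224; 2; 64; -16]%Z else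
  [::].

Definition normal_monos_31 : seq nterm :=
  [:: x1 ** (x4 ** (x2 ** x3)); x2 ** (x1 ** (x3 ** x4)); x2 ** (x4 ** (x1 ** x3));
      x3 ** (x1 ** (x2 ** x4)); x3 ** (x2 ** (x1 ** x4)); x3 ** (x4 ** (x1 ** x2));
      x4 ** (x1 ** (x2 ** x3)); x4 ** (x2 ** (x1 ** x3)); x4 ** (x3 ** (x1 ** x2))].

Definition normal_form_31 (u : nterm) : zterms :=
  if u == (x1 ** x2) ** (x3 ** x4) then
    [:: (1, x1 ** (x4 ** (x2 ** x3))); (2, x2 ** (x1 ** (x3 ** x4)));
        (2, x2 ** (x4 ** (x1 ** x3))); (1, x3 ** (x4 ** (x1 ** x2)));
        (2, x4 ** (x1 ** (x2 ** x3))); (1, x4 ** (x2 ** (x1 ** x3)));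
        (1, x4 ** (x3 ** (x1 ** x2)))]%Z else
  if u == (x1 ** x3) ** (x2 ** x4) then
    [:: (1, x1 ** (x4 ** (x2 ** x3))); (1, x2 ** (x4 ** (x1 ** x3)));
        (2, x3 ** (x1 ** (x2 ** x4))); (2, x3 ** (x4 ** (x1 ** x2)));
        (2, x4 ** (x1 ** (x2 ** x3))); (1, x4 ** (x2 ** (x1 ** x3)));
        (1, x4 ** (x3 ** (x1 ** x2)))]%Z else
  if u == (x1 ** x4) ** (x2 ** x3) then
    [:: (1, x1 ** (x4 ** (x2 ** x3))); (1, x2 ** (x4 ** (x1 ** x3)));
        (2, x3 ** (x2 ** (x1 ** x4))); (2, x3 ** (x4 ** (x1 ** x2)));
        (1, x4 ** (x1 ** (x2 ** x3))); (2, x4 ** (x2 ** (x1 ** x3)));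
        (1, x4 ** (x3 ** (x1 ** x2)))]%Z else
  if u == x1 ** (x2 ** (x3 ** x4)) then
    [:: (1, x1 ** (x4 ** (x2 ** x3))); (1, x2 ** (x1 ** (x3 ** x4)));
        (2, x2 ** (x4 ** (x1 ** x3))); (2, x4 ** (x1 ** (x2 ** x3)));
        (1, x4 ** (x2 ** (x1 ** x3)))]%Z else
  if u == x1 ** (x3 ** (x2 ** x4)) then
    [:: (1, x1 ** (x4 ** (x2 ** x3))); (1, x3 ** (x1 ** (x2 ** x4)));
        (2, x3 ** (x4 ** (x1 ** x2))); (2, x4 ** (x1 ** (x2 ** x3)));
        (1, x4 ** (x3 ** (x1 ** x2)))]%Z else
  if u == x2 ** (x3 ** (x1 ** x4)) then
    [:: (1, x2 ** (x4 ** (x1 ** x3))); (1, x3 ** (x2 ** (x1 ** x4)));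
        (2, x3 ** (x4 ** (x1 ** x2))); (2, x4 ** (x2 ** (x1 ** x3)));
        (1, x4 ** (x3 ** (x1 ** x2)))]%Z else
  [:: (1%Z, u)].

Definition normal_cert_31 (u : nterm) : seq (int * generator) :=
  if u == (x1 ** x2) ** (x3 ** x4) then
    [:: (1, Tk [:: 1; 2; 4; 3]); (1, Tk [:: 1; 3; 2; 4]); (2, Tk [:: 2; 1; 3; 4]);
        (1, Tk [:: 2; 1; 4; 3]); (2, Tk' [:: 1; 2; 3; 4])]%Z else
  if u == (x1 ** x3) ** (x2 ** x4) then
    [:: (1, Tk [:: 1; 3; 2; 4]); (2, Tk [:: 2; 1; 3; 4]); (1, Tk [:: 2; 1; 4; 3]);
        (2, Tk' [:: 1; 2; 3; 4])]%Z else
  if u == (x1 ** x4) ** (x2 ** x3) then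
    [:: (2, Tk [:: 2; 1; 3; 4]); (1, Tk [:: 2; 1; 4; 3]); (2, Tk' [:: 1; 2; 3; 4])]%Z else
  if u == x1 ** (x2 ** (x3 ** x4)) then
    [:: (2, Tk [:: 1; 2; 4; 3]); (2, Tk [:: 1; 3; 2; 4]); (1, Tk [:: 2; 1; 4; 3])]%Z else
  if u == x1 ** (x3 ** (x2 ** x4)) then
    [:: (2, Tk [:: 1; 3; 2; 4]); (2, Tk [:: 2; 1; 3; 4]); (1, Tk [:: 2; 1; 4; 3])]%Z else
  if u == x2 ** (x3 ** (x1 ** x4)) then
    [:: (2, Tk [:: 1; 2; 3; 4]); (1, Tk [:: 1; 2; 4; 3]); (1, Tk [:: 1; 3; 2; 4])]%Z else
  [::].

Definition tests_31 : seq (seq nat) :=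
  [:: [:: 1; 2; 1; 0]; [:: 2; 1; 0; 1]; [:: 1; 2; 0; 0]; [:: 2; 0; 1; 0]; [:: 1; 0; 2; 0];
      [:: 0; 2; 0; 1]; [:: 2; 1; 0; 0]; [:: 0; 0; 2; 1]; [:: 0; 0; 1; 2]].

Definition inverse_31 (u : nterm) : seq int :=
  if u == x1 ** (x4 ** (x2 ** x3)) then [:: -32; 24; 30; 8; -12; -4; -38; -50; 106]%Z else
  if u == x2 ** (x1 ** (x3 ** x4)) then [:: -8; 16; 0; -8; 12; 4; -12; -40; 44]%Z else
  if u == x2 ** (x4 ** (x1 ** x3)) then [:: 32; -24; -35; -8; 12; 4; 33; 65; -91]%Z else
  if u == x3 ** (x1 ** (x2 ** x4)) then [:: -8; 16; 30; 12; -18; -6; -32; -30; 44]%Z else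
  if u == x3 ** (x2 ** (x1 ** x4)) then [:: 8; -16; -25; -12; 18; 6; 37; 15; -19]%Z else
  if u == x3 ** (x4 ** (x1 ** x2)) then [:: 24; -8; -20; -16; 4; 28; 16; 20; -72]%Z else
  if u == x4 ** (x1 ** (x2 ** x3)) then [:: 40; -40; -35; -20; 30; 10; 55; 85; -145]%Z else
  if u == x4 ** (x2 ** (x1 ** x3)) then [:: -40; 40; 45; 20; -30; -10; -45; -75; 115]%Z else
  if u == x4 ** (x3 ** (x1 ** x2)) then [:: -32; 24; 40; 48; -32; -24; -48; -40; 96]%Z else
  [::].

End Certificates.

Lemma canon_monosP : all (fun t => comm_canon t \in canon_monos) multilinear_monomials.
Proof. by vm_compute. Qed.

Lemma normal_cert_bigP : all (fun u =>
  eqmod_zterms 0 (gen_combination (normal_cert_big u))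
    ((1%Z, u) :: zscale (-1) (normal_form_big u)))
  canon_monos.
Proof. by vm_compute. Qed.

Lemma normal_cert_big_tortken : all (fun u => all (fun x => false || ~~ x.2.1) (normal_cert_big u))
  canon_monos.
Proof. by vm_compute. Qed.

Lemma normal_form_big_supp :
  all (fun u => all (fun x => x.2 \in normal_monos_big) (normal_form_big u)) canon_monos.
Proof. by vm_compute. Qed.

Lemma uniq_normal_monos_big : uniq normal_monos_big.
Proof. by vm_compute. Qed.

Lemma tests_bigP : all (fun w => (sumn w - 3 < 5)%N &&
  all (fun t => x_maxweight (nth1 w) t < 5)%N normal_monos_big) tests_big.
Proof. by vm_compute. Qed.

Lemma inverse_bigP : all (fun x => all (fun y =>
  dotz (inverse_big x) [seq basis_coef 5 w y | w <- tests_big] == 128 * (x == y)%:Z)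
  normal_monos_big) normal_monos_big.
Proof. by vm_compute. Qed.

Lemma normal_cert_31P : all (fun u =>
  eqmod_zterms 3 (gen_combination (normal_cert_31 u))
    ((1%Z, u) :: zscale (-1) (normal_form_31 u)))
  canon_monos.
Proof. by vm_compute. Qed.

Lemma normal_form_31_supp :
  all (fun u => all (fun x => x.2 \in normal_monos_31) (normal_form_31 u)) canon_monos.
Proof. by vm_compute. Qed.

Lemma uniq_normal_monos_31 : uniq normal_monos_31.
Proof. by vm_compute. Qed.

Lemma tests_31P : all (fun w => sumn w - 3 < 3)%N tests_31.
Proof. by vm_compute. Qed.

Lemma inverse_31P : all (fun x => all (fun y =>
  dotz (inverse_31 x) [seq basis_coef 3 w y | w <- tests_31] == 40 * (x == y)%:Z)
  normal_monos_31) normal_monos_31.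
Proof. by vm_compute. Qed.

Lemma O1_gens_identity (K : fieldType) (p m : nat) : p \in [pchar K] ->
  forall g, inseq g (O1_gens K p m) -> is_identity (@dp_star K p m) g.
Proof.
move=> pchar_p g; rewrite /O1_gens; case: ifP => [/andP[/eqP p3 /eqP m1]|_]; last first.
  by case=> [<-|[<-|[]]]; [exact: tortken_identity | exact: com_identity].
subst p m; case=> [<-|[<-|[<-|[]]]].
- exact: tortken_identity.
- exact: com_identity.
- exact: tortken'_identity.
Qed.

Lemma O1_complete_big (K : fieldType) (p m : nat) :
  p \in [pchar K] -> (2 < p)%N -> (5 <= p ^ m)%N ->
  forall f, multilin4 f -> is_identity (@dp_star K p m) f -> conseq [:: Tortken K; Com K] f.
Proof.
move=> pchar_p p_gt2 pm_ge5.
have gens : forall g, inseq g [:: Tortken K; Com K] -> is_identity (@dp_star K p m) g.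
  by move=> g [<-|[<-|[]]]; [exact: tortken_identity | exact: com_identity].
have test_trunc w t : w \in tests_big -> t \in normal_monos_big ->
    x_coef (nth1 w) (p ^ m) t = x_coef (nth1 w) 5 t.
  move=> wT tN; have /andP[_ /allP/(_ t tN) t_lt5] := allP tests_bigP w wT.
  by apply: x_coef_trunc => //; apply: leq_trans pm_ge5.
have test_small w : w \in tests_big -> (sumn w - 3 < p ^ m)%N.
  by move=> wT; have /andP[w_lt5 _] := allP tests_bigP w wT; apply: leq_trans pm_ge5.
have unit128 : (128%:~R : K) != 0.
  have -> : (128%:~R : K) = 2%:R ^+ 7 by rewrite -natrX.
  rewrite expf_neq0 // -(dvdn_pcharf pchar_p).
  by apply/negP => /(dvdn_leq (isT : 0 < 2)%N); rewrite leqNgt p_gt2.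
exact: (multilin4_identity_conseq gens (or_intror (or_introl erefl)) (or_introl erefl)
  (fun b : false => match b with end) (erefl (0%:R : K)) canon_monosP normal_cert_bigP
  normal_cert_big_tortken normal_form_big_supp uniq_normal_monos_big test_trunc test_small
  unit128 inverse_bigP).
Qed.

Lemma O1_complete_31 (K : fieldType) : 3 \in [pchar K] ->
  forall f, multilin4 f -> is_identity (@dp_star K 3 1) f ->
  conseq [:: Tortken K; Com K; Tortken' K] f.
Proof.
move=> pchar3.
have gens : forall g, inseq g [:: Tortken K; Com K; Tortken' K] -> is_identity (@dp_star K 3 1) g
  := @O1_gens_identity K 3 1 pchar3.
have three0 : (3%:R : K) = 0 by apply/eqP; rewrite -(dvdn_pcharf pchar3).
have unit40 : (40%:~R : K) != 0 by rewrite pmulrn -(dvdn_pcharf pchar3).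
have cert_gens : all (fun u => all (fun x => true || ~~ x.2.1) (normal_cert_31 u)) canon_monos.
  by apply/allP => u _; apply/allP.
have test_small w : w \in tests_31 -> (sumn w - 3 < 3 ^ 1)%N by apply: (allP tests_31P).
exact: (multilin4_identity_conseq gens (or_intror (or_introl erefl))
  (or_introl erefl) (fun _ => or_intror (or_intror (or_introl erefl))) three0 canon_monosP
  normal_cert_31P cert_gens normal_form_31_supp uniq_normal_monos_31 (fun _ _ _ _ => erefl)
  test_small unit40 inverse_31P).
Qed.

Lemma leq5_expn p m : prime p -> (2 < p)%N -> (0 < m)%N -> ~~ ((p == 3) && (m == 1))%N ->
  (5 <= p ^ m)%N.
Proof.
move=> p_prime p_gt2; case: m => [|[|m]] // _ not31.
  have p_ne3 : p != 3 by move: not31; rewrite andbT.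
  have p_ne4 : p != 4 by apply: contraTneq p_prime => ->.
  by rewrite expn1; lia.
by have := expn_gt0 p m; rewrite !expnS; nia.
Qed.

Theorem mainTheorem14 (K : fieldType) (p m : nat) :
  p \in [pchar K] -> (2 < p)%N -> (1 <= m)%N ->
  (forall g, inseq g (O1_gens K p m) -> is_identity (@dp_star K p m) g) /\
  (forall f : napoly K, multilin4 f ->
     (is_identity (@dp_star K p m) f <-> conseq (O1_gens K p m) f)).
Proof.
move=> pchar_p p_gt2 m_gt0; have gens := @O1_gens_identity K p m pchar_p.
split=> // f f_ml; split; last first.
  exact: (conseq_is_identity (@dp_starDl K p m) (@dp_starDr K p m)
    (@dp_starZl K p m) (@dp_starZr K p m) gens).
rewrite /O1_gens; case: ifP => [/andP[/eqP p3 /eqP m1]|not31].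
  by subst p m; apply: O1_complete_31.
apply: O1_complete_big => //.
by apply: leq5_expn; rewrite ?not31 //; exact: pcharf_prime pchar_p.
Qed.
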